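(* Let $(N,C,\mathbf{A},k)$ be an instance with $|N|=n$ having at least one cohesive group, and let $c_{\max}$ be its maximum EJR degree. If $n>k(k+1)^2(c_{\max}-1)$, then every committee output by $\frac{n}{k(k+1)}$-LS-PAV (i.e., $\lambda$-LS-PAV with $\lambda=\frac{n}{k(k+1)}$, from any initial committee) has EJR degree $c_{\max}$.
   Context: An instance consists of voters $N=\{1,\dots,n\}$, candidates $C$, approval ballots $A_i\subseteq C$ for $i\in N$, and a committee size $k$ with $1\le k\le|C|$. For $\ell\in\mathbb{N}$, $N'\subseteq N$ is an $\ell$-cohesive group if $|N'|\ge\ell n/k$ and $|\bigcap_{i\in N'}A_i|\ge\ell$ (a cohesive group is a $1$-cohesive group). A size-$k$ committee $W$ achieves EJR degree $c$ if for every $\ell\in\{1,\dots,k\}$ every $\ell$-cohesive group contains at least $c$ voters $i$ with $|A_i\cap W|\ge\ell$; its EJR degree is the largest such $c$, and the maximum EJR degree of the instance is the maximum over all size-$k$ committees. The PAV-score of $W$ is $s_{\mathrm{PAV}}(W)=\sum_{i=1}^n\sum_{j=1}^{|A_i\cap W|}\frac1j$, and $\Delta(W,c^+,c^-)=s_{\mathrm{PAV}}((W\setminus\{c^-\})\cup\{c^+\})-s_{\mathrm{PAV}}(W)$. The algorithm $\lambda$-LS-PAV starts from an arbitrary size-$k$ committee $W$ and, while there exist $c^+\notin W$ and $c^-\in W$ with $\Delta(W,c^+,c^-)\ge\lambda$, replaces $W$ by $(W\setminus\{c^-\})\cup\{c^+\}$; it then outputs $W$. *)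

From mathcomp Require Import all_boot all_order all_algebra.
Set Implicit Arguments. Unset Strict Implicit. Unset Printing Implicit Defensive.
Import Order.TTheory GRing.Theory Num.Theory.

Section Elections.
Variables (C : finType) (n : nat) (A : 'I_n -> {set C}) (k : nat).

Definition cohesive (l : nat) (N' : {set 'I_n}) : bool :=
  (l * n <= #|N'| * k)%N && (l <= #|\bigcap_(i in N') A i|)%N.

Definition committee (W : {set C}) : Prop := #|W| = k.

Definition achieves_ejr (W : {set C}) (c : nat) : Prop :=
  forall l : nat, (1 <= l <= k)%N -> forall N' : {set 'I_n}, cohesive l N' ->
    (c <= #|[set i in N' | l <= #|A i :&: W| ]|)%N.

Definition ejr_degree (W : {set C}) (c : nat) : Prop :=
  achieves_ejr W c /\ forall c', achieves_ejr W c' -> (c' <= c)%N.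

Definition max_ejr_degree (cmax : nat) : Prop :=
  (exists W, committee W /\ ejr_degree W cmax) /\
  (forall W d, committee W -> ejr_degree W d -> (d <= cmax)%N).

Local Open Scope ring_scope.

Definition pav_score (W : {set C}) : rat :=
  \sum_(i < n) \sum_(j < #|A i :&: W|) (j.+1)%:R^-1.

Definition delta (W : {set C}) (cp cm : C) : rat :=
  pav_score ((W :\ cm) :|: [set cp]) - pav_score W.

Definition ls_step (lam : rat) (W W' : {set C}) : Prop :=
  exists cp cm, cp \notin W /\ cm \in W /\ lam <= delta W cp cm /\
    W' = (W :\ cm) :|: [set cp].

Inductive ls_reach (lam : rat) : {set C} -> {set C} -> Prop :=
| ls_refl W : ls_reach lam W W
| ls_next W1 W2 W3 : ls_step lam W1 W2 -> ls_reach lam W2 W3 -> ls_reach lam W1 W3.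

Definition ls_pav_output (lam : rat) (W : {set C}) : Prop :=
  exists W0, committee W0 /\ ls_reach lam W0 W /\
    ~ (exists cp cm, cp \notin W /\ cm \in W /\ lam <= delta W cp cm).

End Elections.

(** If no swap gains λ = n/(k(k+1)), let N' be ℓ-cohesive.  Either W contains
    every candidate approved by all of N', and then all of N' is represented,
    or some such candidate c is outside W.  Summing the gains of swapping c for each
    member of W, every voter of N' with fewer than ℓ winners contributes at
    least (k+1)/ℓ, every voter loses at most 1, and the total is below kλ.
    Hence at most ℓn(k+2)/(k+1)^2 voters of N' are underrepresented, leaving
    at least ℓn/k - ℓn(k+2)/(k+1)^2 = ℓn/(k(k+1)^2) > c_max - 1 represented
    ones.  So W achieves EJR degree c_max, which is the maximum possible. *)

From mathcomp Require Import all_boot all_order all_algebra.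
From mathcomp Require Import ring lra.
Import Order.TTheory GRing.Theory Num.Theory.
Set Implicit Arguments. Unset Strict Implicit. Unset Printing Implicit Defensive.
Local Open Scope ring_scope.

Section PavSwap.
Variables (C : finType) (n : nat) (A : 'I_n -> {set C}).

Definition harmonic (m : nat) : rat := \sum_(j < m) (j.+1)%:R^-1.

Lemma harmonicS m : harmonic m.+1 = harmonic m + (m.+1)%:R^-1.
Proof. by rewrite /harmonic big_ord_recr. Qed.

Lemma pav_scoreE W : pav_score A W = \sum_(i < n) harmonic #|A i :&: W|.
Proof. by []. Qed.

Lemma card_setI_swap (S W : {set C}) c cm : c \notin W ->
  #|S :&: (W :\ cm :|: [set c])| = ((c \in S) + #|S :&: W :\ cm|)%N.
Proof.
move=> cW; rewrite setIUr setIDA.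
have [cS | cS] := boolP (c \in S).
  rewrite [S :&: [set c]](setIidPr _) ?sub1set // setUC cardsU1.
  by rewrite !inE (negbTE cW) !andbF.
rewrite (_ : S :&: [set c] = set0) ?setU0 //.
by apply/setP => x; rewrite !inE; apply/andP => -[xS /eqP xc]; rewrite -xc xS in cS.
Qed.

Lemma harmonic_swap (S W : {set C}) c cm : c \notin W -> cm \in W ->
  harmonic #|S :&: (W :\ cm :|: [set c])| - harmonic #|S :&: W| =
  if c \in S then (if cm \in S then 0 else (#|S :&: W|.+1)%:R^-1)
  else (if cm \in S then - #|S :&: W|%:R^-1 else 0).
Proof.
move=> cW cmW; rewrite card_setI_swap // [#|S :&: W|](cardsD1 cm) !inE cmW andbT.
case: (c \in S); case: (cm \in S); rewrite ?add0n ?add1n ?subrr //.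
- by rewrite harmonicS addrAC subrr add0r.
- by rewrite harmonicS opprD addrA subrr add0r.
Qed.

Lemma sum_harmonic_swap_ge (S W : {set C}) c : c \notin W ->
  (if c \in S then (#|W|.+1)%:R / (#|S :&: W|.+1)%:R else 0) - 1 <=
  \sum_(cm in W) (harmonic #|S :&: (W :\ cm :|: [set c])| - harmonic #|S :&: W|).
Proof.
move=> cW; under eq_bigr => cm cmW do rewrite harmonic_swap //.
rewrite (big_setID S) /=.
under eq_bigr => cm /setIP[_ cmS] do rewrite cmS.
under [X in _ <= _ + X]eq_bigr => cm /setDP[_ /negbTE cmS] do rewrite cmS.
rewrite !sumr_const cardsD [W :&: S]setIC.
have mW : (#|S :&: W| <= #|W|)%N by rewrite subset_leq_card ?subsetIr.
move: #|S :&: W| #|W| mW => m w mw.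
case: (c \in S).
  rewrite mul0rn add0r -[_ *+ (w - m)]mulr_natr natrB // -!natr1.
  by rewrite le_eqVlt; apply/predU1l; field; rewrite natr1 pnatr_eq0.
rewrite mul0rn addr0; case: m mw => [|m] _; first by rewrite mulr0n lerN10.
by rewrite mulNrn -[_ *+ m.+1]mulr_natr mulVf ?pnatr_eq0.
Qed.

Lemma sum_delta_ge (W : {set C}) c : c \notin W ->
  \sum_(i < n) (if c \in A i then (#|W|.+1)%:R / (#|A i :&: W|.+1)%:R else 0)
    - n%:R <= \sum_(cm in W) delta A W c cm.
Proof.
move=> cW; rewrite /delta !pav_scoreE.
under [X in _ <= X]eq_bigr do rewrite -sumrB.
have -> : n%:R = \sum_(i < n) 1 :> rat by rewrite sumr_const card_ord.
rewrite exchange_big -sumrB /=.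
by apply: ler_sum => i _; apply: sum_harmonic_swap_ge.
Qed.

Lemma sum_delta_cohesive_ge (W : {set C}) (N' : {set 'I_n}) c l :
  c \in \bigcap_(i in N') A i -> c \notin W ->
  (#|W|.+1)%:R / l%:R * #|N' :\: [set i in N' | (l <= #|A i :&: W|)%N]|%:R - n%:R
    <= \sum_(cm in W) delta A W c cm.
Proof.
move=> cN cW; apply: le_trans (sum_delta_ge cW); rewrite lerD2r.
rewrite mulr_natr -sumr_const big_mkcond /=; apply: ler_sum => i _.
case: ifP => [/setDP[iN] | _]; last by case: ifP => // _; rewrite divr_ge0.
rewrite inE iN -ltnNge => ilt; rewrite (bigcapP cN) //.
by rewrite ler_pM2l ?ltr0n // lef_pV2 ?posrE ?ltr0n ?ler_nat // (leq_ltn_trans _ ilt).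
Qed.

End PavSwap.

Lemma clear_denominators_swap_bound (R : realFieldType) (K L N y : R) : 0 < K -> 0 < L ->
  (K + 1) / L * y - N <= N / (K + 1) -> (K + 1) ^+ 2 * y <= N * L * (K + 2).
Proof.
move=> K_pos L_pos; have LK_pos : 0 < L * (K + 1) by apply: mulr_gt0; lra.
rewrite -(ler_pM2l LK_pos).
have -> : L * (K + 1) * ((K + 1) / L * y - N) = (K + 1) ^+ 2 * y - N * L * (K + 1).
  by field; rewrite gt_eqF.
have -> : L * (K + 1) * (N / (K + 1)) = N * L by field; rewrite gt_eqF //; lra.
lra.
Qed.

Section LocalOptimum.
Variables (C : finType) (n : nat) (A : 'I_n -> {set C}) (k : nat) (W : {set C}).
Hypotheses (k_gt0 : (0 < k)%N) (Wk : #|W| = k).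
Hypothesis W_stuck : forall cp cm, cp \notin W -> cm \in W ->
  delta A W cp cm < n%:R / (k%:R * (k.+1)%:R).

Lemma underrepresented_card_le (N' : {set 'I_n}) c l : (0 < l)%N ->
  c \in \bigcap_(i in N') A i -> c \notin W ->
  (k.+1)%:R ^+ 2 * #|N' :\: [set i in N' | (l <= #|A i :&: W|)%N]|%:R
    <= n%:R * l%:R * (k.+2)%:R :> rat.
Proof.
move=> l_gt0 cN cW.
have gain := sum_delta_cohesive_ge l cN cW; rewrite Wk in gain.
have loss : \sum_(cm in W) delta A W c cm <= n%:R / (k.+1)%:R.
  rewrite (_ : n%:R / _ = n%:R / (k%:R * (k.+1)%:R) *+ #|W|); last first.
    have k_pos : 0 < k%:R :> rat by rewrite ltr0n.
    by rewrite Wk -mulr_natr; field; rewrite !gt_eqF //; lra.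
  by rewrite -sumr_const; apply: ler_sum => cm cmW; apply/ltW/W_stuck.
rewrite -[k.+2]addn2 -[k.+1]addn1 !natrD in gain loss *.
by apply: clear_denominators_swap_bound (le_trans gain loss); rewrite ltr0n.
Qed.

Lemma represented_card_ge (N' : {set 'I_n}) c l : (0 < l)%N -> cohesive A k l N' ->
  c \in \bigcap_(i in N') A i -> c \notin W ->
  l%:R * n%:R <= k%:R * (k.+1)%:R ^+ 2 * #|[set i in N' | (l <= #|A i :&: W|)%N]|%:R :> rat.
Proof.
move=> l_gt0 /andP[N'_large _] cN cW.
have XN' : [set i in N' | (l <= #|A i :&: W|)%N] \subset N'.
  by apply/subsetP => i; rewrite inE => /andP[].
have := underrepresented_card_le l_gt0 cN cW.
rewrite cardsD (setIidPr XN') natrB ?subset_leq_card //.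
move: N'_large; rewrite -(ler_nat rat) !natrM -[k.+2]addn2 -[k.+1]addn1 !natrD.
have : 0 <= k%:R :> rat by [].
(* (k+1)^2 times the cohesiveness bound plus k times the previous one *)
nra.
Qed.

Lemma stuck_achieves_ejr c :
  (forall l N', (1 <= l <= k)%N -> cohesive A k l N' -> (c <= #|N'|)%N) ->
  k%:R * (k.+1)%:R ^+ 2 * (c%:R - 1) < n%:R :> rat ->
  achieves_ejr A k W c.
Proof.
move=> c_le_card n_large l l_range N' coh.
have [capW | /subsetPn[c' cN c'W]] := boolP (\bigcap_(i in N') A i \subset W).
  apply: leq_trans (c_le_card _ _ l_range coh) (subset_leq_card _).
  apply/subsetP => i iN; rewrite inE iN; case/andP: coh => _ /leq_trans; apply.
  apply/subset_leq_card/subsetP => x xN; rewrite inE (subsetP capW) // andbT.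
  exact: (bigcapP xN).
case/andP: l_range => l_gt0 _.
have := represented_card_ge l_gt0 coh cN c'W.
rewrite leqNgt; apply: contraTN => X_lt_c.
rewrite -ltNge; apply: le_lt_trans (lt_le_trans n_large _).
  by rewrite ler_wpM2l ?mulr_ge0 ?exprn_ge0 // lerBrDr natr1 ler_nat.
by apply: ler_peMl; rewrite ?ler1n.
Qed.

End LocalOptimum.

Section EjrDegree.
Variables (C : finType) (n : nat) (A : 'I_n -> {set C}) (k : nat).

Definition achieves_ejrb W c : bool :=
  [forall l : 'I_k.+1, forall N' : {set 'I_n}, (0 < l)%N && cohesive A k l N' ==>
     (c <= #|[set i in N' | (l <= #|A i :&: W|)%N]|)%N].

Lemma achieves_ejrP W c : reflect (achieves_ejr A k W c) (achieves_ejrb W c).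
Proof.
apply: (iffP forallP) => [ejr l /andP[l_gt0 l_le] N' coh | ejr l].
  by have /forallP/(_ N')/implyP := ejr (Ordinal (l_le : (l < k.+1)%N)); rewrite l_gt0; apply.
apply/forallP => N'; apply/implyP => /andP[l_gt0 coh].
by apply: ejr _ _ _ coh; rewrite l_gt0 -ltnS ltn_ord.
Qed.

Lemma achieves_ejr_le_card W c l N' : achieves_ejr A k W c ->
  (1 <= l <= k)%N -> cohesive A k l N' -> (c <= #|N'|)%N.
Proof.
move=> ejr l_range coh; apply: leq_trans (ejr l l_range N' coh) (subset_leq_card _).
by apply/subsetP => i; rewrite inE => /andP[].
Qed.

Lemma ejr_degree_exists W : (0 < k)%N -> (exists N', cohesive A k 1 N') ->
  exists d, ejr_degree A k W d.
Proof.
move=> k_gt0 [N0 coh0].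
have achieves0 : exists c, achieves_ejrb W c by exists 0%N; apply/achieves_ejrP.
have bounded c : achieves_ejrb W c -> (c <= n)%N.
  move=> /achieves_ejrP ejr; rewrite -[n]card_ord; apply: leq_trans (max_card N0).
  exact: achieves_ejr_le_card ejr _ coh0.
have [d /achieves_ejrP ejr_d d_max] := ex_maxnP achieves0 bounded.
by exists d; split=> // c /achieves_ejrP; apply: d_max.
Qed.

Lemma ejr_degree_max_achieved W cmax : max_ejr_degree A k cmax -> committee k W ->
  achieves_ejr A k W cmax -> (exists d, ejr_degree A k W d) -> ejr_degree A k W cmax.
Proof.
move=> [_ cmax_max] Wk ejr [d [ejr_d d_max]]; split=> // c ejr_c.
exact: leq_trans (d_max c ejr_c) (cmax_max W d Wk (conj ejr_d d_max)).
Qed.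

End EjrDegree.

Lemma ls_reach_committee (C : finType) n (A : 'I_n -> {set C}) k lam W0 W :
  ls_reach A lam W0 W -> committee k W0 -> committee k W.
Proof.
elim=> // W1 W2 W3 [cp [cm [cpW1 [cmW1 [_ ->]]]]] _ IH W1k; apply: IH.
rewrite /committee setUC cardsU1 !inE (negbTE cpW1) andbF /=.
by rewrite -W1k (cardsD1 cm W1) cmW1 add1n.
Qed.

Theorem corollary2 (C : finType) (n : nat) (A : 'I_n -> {set C}) (k : nat)
  (cmax : nat) :
  (1 <= k)%N -> (k <= #|C|)%N ->
  (exists N' : {set 'I_n}, cohesive A k 1 N') ->
  max_ejr_degree A k cmax ->
  (k%:R * (k.+1)%:R ^+ 2 * (cmax%:R - 1) < n%:R :> rat) ->
  forall W : {set C},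
    ls_pav_output A k (n%:R / (k%:R * (k.+1)%:R)) W ->
    ejr_degree A k W cmax.
Proof.
move=> k_gt0 _ cohesive_ex cmax_deg n_large W [W0 [W0k [reach stuck]]].
have Wk := ls_reach_committee reach W0k.
have W_stuck cp cm : cp \notin W -> cm \in W ->
    delta A W cp cm < n%:R / (k%:R * (k.+1)%:R).
  by move=> cpW cmW; rewrite ltNge; apply/negP => gain; apply: stuck; exists cp, cm.
have [[Wopt [_ [Wopt_ejr _]]] _] := cmax_deg.
apply: (ejr_degree_max_achieved cmax_deg Wk _ (ejr_degree_exists W k_gt0 cohesive_ex)).
apply: (stuck_achieves_ejr k_gt0 Wk W_stuck _ n_large) => l N'.
exact: achieves_ejr_le_card Wopt_ejr.
Qed.
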